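(* Let $\mathbb{K}$ be a field with $\mathbb{Q}\subseteq\mathbb{K}\subseteq\mathbb{C}$, and let $n\ge 1$. Suppose the complex numbers $x_1,\dots,x_n$ and $y_1,\dots,y_n$ satisfy the system $$f_j(x_1,\dots,x_n,y_1,\dots,y_n)=0\qquad(j=1,\dots,n)$$ for some polynomials $f_j(X_1,\dots,X_n,Y_1,\dots,Y_n)\in\mathbb{K}[X_1,\dots,X_n,Y_1,\dots,Y_n]$, $j=1,\dots,n$. If $x_1,\dots,x_n$ are algebraically independent over $\mathbb{K}$ and $$\det\Big(\frac{\partial f_j}{\partial X_i}(x_1,\dots,x_n,y_1,\dots,y_n)\Big)_{1\le i,j\le n}\neq 0,$$ then $y_1,\dots,y_n$ are algebraically independent over $\mathbb{K}$.
   Context: In the Jacobian matrix, $j$ indexes rows and $i$ indexes columns (the determinant is of an $n\times n$ matrix). *)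

From HB Require Import structures.
From mathcomp Require Import all_boot all_order all_algebra.
From mathcomp.multinomials Require Import mpoly.
From mathcomp.real_closed Require Import complex.
From mathcomp Require Import Rstruct.
Set Implicit Arguments. Unset Strict Implicit. Unset Printing Implicit Defensive.
Import Order.TTheory GRing.Theory Num.Theory.
Local Open Scope ring_scope.

Definition C : Type := complex Rdefinitions.R.
(* K is a subfield of C: contains 1, closed under subtraction and division.
   (Any such K automatically contains Q since C has characteristic 0.) *)
Definition is_subfield (K : {pred C}) : Prop := GRing.divring_closed K.

Definition alg_indep (K : {pred C}) (n : nat) (x : 'I_n -> C) : Prop :=
  forall p : {mpoly C[n]}, p \is a mpolyOver n K -> p.@[x] = 0 -> p = 0.

(* The point (x_1,..,x_n,y_1,..,y_n) of C^(n+n); variable X_i is index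
   lshift n i, variable Y_i is index rshift n i. *)
Definition pt (n : nat) (x y : 'I_n -> C) : 'I_(n + n) -> C :=
  fun k => match split k with inl i => x i | inr i => y i end.

Definition jacX (n : nat) (f : 'I_n -> {mpoly C[n + n]}) (x y : 'I_n -> C)
  : 'M[C]_n :=
  \matrix_(j < n, i < n) ((f j)^`M(lshift n i)).@[pt x y].

From HB Require Import structures.
From mathcomp Require Import all_boot all_order all_algebra.
From mathcomp.multinomials Require Import mpoly.
From mathcomp.real_closed Require Import complex.
From mathcomp Require Import Rstruct ring.
From Stdlib Require Import Classical ClassicalEpsilon.
Import GRing.Theory Num.Theory.
Local Open Scope ring_scope.

(* Suppose y is algebraically dependent and let q be a polynomial over K of
   minimal degree with q(y) = 0, so that some (dq/dY_k)(y) is nonzero. Because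
   x is algebraically independent, every direction u gives a K-derivation of
   K[x] with D x = u, and a derivation of a subring of C extends to any element
   of C; hence there is a K-derivation D whose domain contains x and y with
   D x = e_i. Differentiating f_j(x, y) = 0 and q(y) = 0 gives
   J_X e_i + J_Y D(y) = 0 and grad q(y) . D(y) = 0. Collecting the vectors D(y)
   for i = 1..n as the columns of a matrix M, we get J_X = - J_Y M, so M is
   invertible, and grad q(y) M = 0 then forces grad q(y) = 0. *)

Set Implicit Arguments. Unset Strict Implicit. Unset Printing Implicit Defensive.

Lemma ex_minimal (P : nat -> Prop) :
  (exists m, P m) -> exists m, P m /\ forall k, (k < m)%N -> ~ P k.
Proof.
move=> [m Pm]; elim/ltn_ind: m Pm => m IH Pm.
case: (classic (exists k, (k < m)%N /\ P k)) => [[k [ltkm Pk]]|none].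
  exact: IH k ltkm Pk.
by exists m; split=> // k ltkm Pk; apply: none; exists k.
Qed.

Lemma factor_through_image (A T U : Type) (u0 : U)
    (ok : A -> Prop) (ev : A -> T) (phi : A -> U) :
  (forall a b, ok a -> ok b -> ev a = ev b -> phi a = phi b) ->
  exists g : T -> U, forall a, ok a -> g (ev a) = phi a.
Proof.
move=> phi_wd.
pose g c := match excluded_middle_informative (exists a, ok a /\ ev a = c) with
  | left h => phi (proj1_sig (constructive_indefinite_description _ h))
  | right _ => u0 end.
exists g => a oka; rewrite /g.
case: excluded_middle_informative => [h|[]]; last by exists a.
by case: constructive_indefinite_description => b [okb evb]; apply: phi_wd.
Qed.

Section MPolyDerivative.
Variables (R : numDomainType) (n : nat).
Implicit Types (p q : {mpoly R[n]}).

Lemma meval_mderivX_sum (j : 'I_n) (z w : 'I_n -> R) :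
  \sum_i (('X_j : {mpoly R[n]})^`M(i)).@[z] * w i = w j.
Proof.
rewrite (bigD1 j) //= big1 ?addr0.
  rewrite mderivX mnm1E eqxx.
  have -> : (U_(j) - U_(j) = 0)%MM by rewrite -{1}(add0m U_(j)%MM) addmK.
  by rewrite mpolyX0 scale1r meval1 mul1r.
move=> i /negbTE nij; rewrite mderivX mnm1E eq_sym nij scale0r meval0.
by rewrite mul0r.
Qed.

Lemma msize_mderiv_lt p i : p != 0 -> (msize p^`M(i) < msize p)%N.
Proof.
move=> nz; have pos : (0 < msize p)%N by rewrite lt0n msize_poly_eq0.
rewrite -(prednK pos) ltnS msizeE big_seq; elim/big_ind: _ => //.
  by move=> a b ha hb; rewrite geq_max ha hb.
move=> m hm.
have : (p^`M(i))@_m != 0 by rewrite mcoeff_eq0 negbK.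
rewrite mcoeff_mderiv mulrn_eq0 negb_or => /andP [_ nz'].
have : (m + U_(i))%MM \in msupp p by rewrite -[_ \in _]negbK -mcoeff_eq0.
move/msize_mdeg_lt; rewrite mdegD mdeg1 addn1 => lt.
by rewrite -ltnS prednK.
Qed.

Lemma mderiv_eq0_mpolyC p : (forall i, p^`M(i) = 0) -> p = (p@_0)%:MP.
Proof.
move=> h; apply/mpolyP => m; rewrite mcoeffC.
have [->|nz] := eqVneq m 0%MM; first by rewrite mulr1.
rewrite mulr0.
have [i hi] : exists i, (0 < m i)%N.
  case: (pickP (fun i => 0 < m i)%N) => [i hi|none]; first by exists i.
  case/negP: nz; apply/eqP/mnmP => i; have := none i.
  by rewrite mnm0E lt0n => /negbT; rewrite negbK => /eqP.
have le : (U_(i) <= m)%MM.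
  by apply/mnm_lepP => j; rewrite mnm1E; case: eqP => // <-.
have := congr1 (mcoeff (m - U_(i))) (h i); rewrite mcoeff_mderiv submK // mcoeff0.
by move/eqP; rewrite mulrn_eq0 /= => /eqP.
Qed.

Variables (S : {pred R}) (hS : GRing.zmod_closed S).
HB.instance Definition _ := GRing.isZmodClosed.Build R S hS.

Lemma mpolyOver_mderiv p i : p \is a mpolyOver n S -> p^`M(i) \is a mpolyOver n S.
Proof. by move=> /mpolyOverP Sp; apply/mpolyOverP => m; rewrite mcoeff_mderiv rpredMn. Qed.

(* Take q of minimal total degree: it is not constant, and its partial
   derivatives have smaller degree. *)
Lemma exists_root_mderiv_neq0 (y : 'I_n -> R) p :
  p \is a mpolyOver n S -> p != 0 -> p.@[y] = 0 ->
  exists q i, [/\ q \is a mpolyOver n S, q.@[y] = 0 & (q^`M(i)).@[y] != 0].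
Proof.
move=> Sp nzp py.
have [m [[q [Sq nzq qy <-]] minm]] := ex_minimal (ex_intro (fun m =>
  exists q, [/\ q \is a mpolyOver n S, q != 0, q.@[y] = 0 & msize q = m]) _
  (ex_intro _ p (And4 Sp nzp py erefl))).
have [i nzi] : exists i, q^`M(i) != 0.
  apply: NNPP => none.
  have qC : q = (q@_0)%:MP.
    apply: mderiv_eq0_mpolyC => i; apply/eqP; apply: contraT => nzi.
    by case: none; exists i.
  by move: nzq qy; rewrite qC mevalC => /negP nzq q0; apply: nzq; rewrite q0.
exists q, i; split => //; apply/eqP => qiy.
apply: (minm _ (msize_mderiv_lt i nzq)).
by exists q^`M(i); split; rewrite ?mpolyOver_mderiv.
Qed.

End MPolyDerivative.

Lemma deriv_neq0 (R : numDomainType) (p : {poly R}) : (1 < size p)%N -> p^`() != 0.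
Proof.
move=> gt1; have nz : p != 0 by rewrite -size_poly_gt0 ltnW.
apply/eqP => /(congr1 (fun q : {poly R} => q`_(size p).-2)).
rewrite coef_deriv coef0 => /eqP; rewrite mulrn_eq0 /=.
have -> : ((size p).-2).+1 = (size p).-1 by case: (size p) gt1 => [|[|k]].
by rewrite -lead_coefE lead_coef_eq0 (negbTE nz).
Qed.

Lemma size_lead_cancel (R : idomainType) (G0 G : {poly R}) :
  G0 != 0 -> G != 0 -> (size G0 <= size G)%N ->
  (size (lead_coef G0 *: G - (lead_coef G *: 'X^(size G - size G0)) * G0)%R
    < size G)%N.
Proof.
move=> nz0 nzG le0; set H := _ * G0.
have nzXn : 'X^(size G - size G0) != 0 :> {poly R}.
  by rewrite -size_poly_eq0 size_polyXn.
have sH : size H = size G.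
  rewrite /H -scalerAl size_scale ?lead_coef_eq0 // size_mul //.
  by rewrite size_polyXn addSn /= subnK.
have lH : lead_coef H = lead_coef G * lead_coef G0.
  by rewrite /H -scalerAl lead_coefZ lead_coefM lead_coefXn mul1r.
have pos : (0 < size G)%N by rewrite size_poly_gt0.
rewrite -(prednK pos) ltnS; apply/leq_sizeP => j.
rewrite leq_eqVlt coefB coefZ => /orP [/eqP <-|lt].
  rewrite -{2}sH -!lead_coefE lH; ring.
rewrite prednK // in lt.
by rewrite !nth_default ?mulr0 ?subrr ?sH.
Qed.

Section Derivations.
Variables (L : numFieldType) (K : {pred L}) (hK : GRing.subring_closed K).
HB.instance Definition _ := GRing.isSubringClosed.Build L K hK.

(* A derivation of L over K whose domain [dom] is a subring containing K.
   Domains are Prop-valued since they are described by existentials. *)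
Record derivation (dom : L -> Prop) (D : L -> L) : Prop := Derivation {
  dom_K : forall k, k \in K -> dom k;
  dom_D : forall a b, dom a -> dom b -> dom (a + b);
  dom_M : forall a b, dom a -> dom b -> dom (a * b);
  dom_N : forall a, dom a -> dom (- a);
  derivationD : forall a b, dom a -> dom b -> D (a + b) = D a + D b;
  derivationM : forall a b, dom a -> dom b -> D (a * b) = D a * b + a * D b;
  derivation_K : forall k, k \in K -> D k = 0 }.

Section DerivationTheory.
Variables (dom : L -> Prop) (D : L -> L) (hD : derivation dom D).

Lemma dom0 : dom 0. Proof. by apply: (dom_K hD); rewrite rpred0. Qed.
Lemma dom1 : dom 1. Proof. by apply: (dom_K hD); rewrite rpred1. Qed.

Lemma derivation0 : D 0 = 0.
Proof. by apply: (derivation_K hD); rewrite rpred0. Qed.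

Lemma dom_sum (I : Type) (r : seq I) (F : I -> L) :
  (forall i, dom (F i)) -> dom (\sum_(i <- r) F i).
Proof.
move=> domF; elim: r => [|a r IH]; rewrite ?big_nil ?big_cons; first exact: dom0.
exact: (dom_D hD).
Qed.

Lemma dom_natmul a k : dom a -> dom (a *+ k).
Proof.
move=> da; elim: k => [|k IH]; first by rewrite mulr0n; exact: dom0.
by rewrite mulrS; apply: (dom_D hD).
Qed.

Lemma derivation_sum (I : Type) (r : seq I) (F : I -> L) :
  (forall i, dom (F i)) -> D (\sum_(i <- r) F i) = \sum_(i <- r) D (F i).
Proof.
move=> domF; elim: r => [|a r IH]; rewrite ?big_nil ?big_cons ?derivation0 //.
by rewrite (derivationD hD) ?IH //; exact: dom_sum.
Qed.

Lemma derivation_meval N (z : 'I_N -> L) (p : {mpoly L[N]}) :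
  (forall i, dom (z i)) -> p \is a mpolyOver N K ->
  dom p.@[z] /\ D p.@[z] = \sum_i (p^`M(i)).@[z] * D (z i).
Proof.
move=> domz; pose chain g := dom g.@[z] /\
  D g.@[z] = \sum_i (g^`M(i)).@[z] * D (z i).
have chainD g h : chain g -> chain h -> chain (g + h).
  case=> dg Dg [dh Dh]; split; rewrite mevalD; first exact: (dom_D hD).
  rewrite (derivationD hD) // Dg Dh -big_split /=; apply: eq_bigr => i _.
  by rewrite mderivD mevalD mulrDl.
have chainM g h : chain g -> chain h -> chain (g * h).
  case=> dg Dg [dh Dh]; split; rewrite mevalM; first exact: (dom_M hD).
  rewrite (derivationM hD) // Dg Dh mulr_suml mulr_sumr -big_split /=.
  by apply: eq_bigr => i _; rewrite mderivM mevalD !mevalM; ring.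
have chainC c : c \in K -> chain c%:MP.
  move=> Kc; split; rewrite mevalC; first exact: (dom_K hD).
  by rewrite (derivation_K hD) // big1 // => i _; rewrite mderivC meval0 mul0r.
have chain1 : chain 1 by rewrite -mpolyC1; apply: chainC; rewrite rpred1.
move=> /mpolyOverP Kp; rewrite (mpolyE p); elim/big_ind: _ => //.
  by rewrite -mpolyC0; apply: chainC; rewrite rpred0.
move=> m _; rewrite -mul_mpolyC; apply: (chainM); first exact: chainC.
rewrite mpolyXE_id; elim/big_ind: _ => // i _.
elim: (m i) => [|k IH]; first by rewrite expr0.
rewrite exprS; apply: (chainM) => //.
by split; rewrite mevalXU ?meval_mderivX_sum.
Qed.

Definition poly_on (G : {poly L}) := forall i, dom G`_i.

Lemma poly_onC c : dom c -> poly_on c%:P.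
Proof. by move=> dc i; rewrite coefC; case: eqP => _ //; exact: dom0. Qed.

Lemma poly_onX : poly_on 'X.
Proof. by move=> i; rewrite coefX; case: eqP => _; [exact: dom1 | exact: dom0]. Qed.

Lemma poly_onD G H : poly_on G -> poly_on H -> poly_on (G + H).
Proof. by move=> oG oH i; rewrite coefD; apply: (dom_D hD). Qed.

Lemma poly_onN G : poly_on G -> poly_on (- G).
Proof. by move=> oG i; rewrite coefN; apply: (dom_N hD). Qed.

Lemma poly_onM G H : poly_on G -> poly_on H -> poly_on (G * H).
Proof. by move=> oG oH i; rewrite coefM; apply: dom_sum => j; exact: (dom_M hD). Qed.

Lemma poly_onZ c G : dom c -> poly_on G -> poly_on (c *: G).
Proof. by move=> dc oG; rewrite -mul_polyC; apply: poly_onM => //; apply: poly_onC. Qed.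

Lemma poly_onXn d : poly_on 'X^d.
Proof.
elim: d => [|d IH]; first by rewrite expr0 -polyC1; apply/poly_onC/dom1.
by rewrite exprS; apply: poly_onM => //; exact: poly_onX.
Qed.

Lemma poly_on_deriv G : poly_on G -> poly_on G^`().
Proof. by move=> oG i; rewrite coef_deriv; apply/dom_natmul/oG. Qed.

Lemma map_derivationC c : map_poly D c%:P = (D c)%:P.
Proof.
apply/polyP => i; rewrite coef_map_id0 ?derivation0 // !coefC.
by case: (i == 0%N); rewrite ?derivation0.
Qed.

Lemma map_derivationD G H : poly_on G -> poly_on H ->
  map_poly D (G + H) = map_poly D G + map_poly D H.
Proof.
move=> oG oH; apply/polyP => i.
by rewrite coefD !coef_map_id0 ?derivation0 // coefD (derivationD hD).
Qed.

Lemma map_derivationM G H : poly_on G -> poly_on H ->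
  map_poly D (G * H) = map_poly D G * H + G * map_poly D H.
Proof.
move=> oG oH; apply/polyP => i.
rewrite coefD !coefM coef_map_id0 ?derivation0 // coefM.
rewrite derivation_sum => [|j]; last exact: (dom_M hD).
rewrite -big_split /=; apply: eq_bigr => j _.
by rewrite !coef_map_id0 ?derivation0 // (derivationM hD).
Qed.

Section Adjoin.
Variables (t s : L).

(* The value at G(t) of an extension of D sending t to s. *)
Definition adjoin_der (G : {poly L}) := (map_poly D G).[t] + G^`().[t] * s.

Lemma adjoin_der0 : adjoin_der 0 = 0.
Proof. by rewrite /adjoin_der map_poly0 deriv0 !horner0 mul0r addr0. Qed.

Lemma adjoin_derC c : adjoin_der c%:P = D c.
Proof. by rewrite /adjoin_der map_derivationC derivC !hornerC mul0r addr0. Qed.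

Lemma adjoin_derD G H : poly_on G -> poly_on H ->
  adjoin_der (G + H) = adjoin_der G + adjoin_der H.
Proof.
by move=> oG oH; rewrite /adjoin_der map_derivationD // derivD !hornerD; ring.
Qed.

Lemma adjoin_derM G H : poly_on G -> poly_on H ->
  adjoin_der (G * H) = adjoin_der G * H.[t] + G.[t] * adjoin_der H.
Proof.
move=> oG oH; rewrite /adjoin_der map_derivationM // derivM.
by rewrite !hornerD !hornerM; ring.
Qed.

(* Pseudo-division by a minimal polynomial G0 of t: the leading terms of
   c G and of (l X^d) G0 cancel, where c and l are the leading coefficients. *)
Lemma adjoin_der_root G0 : poly_on G0 -> G0 != 0 -> G0.[t] = 0 ->
  adjoin_der G0 = 0 ->
  (forall G, poly_on G -> G != 0 -> G.[t] = 0 -> (size G0 <= size G)%N) ->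
  forall G, poly_on G -> G.[t] = 0 -> adjoin_der G = 0.
Proof.
move=> oG0 nz0 r0 DG0 min G.
have [k] := ubnP (size G); elim: k G => // k IH G szG oG rG.
have [->|nzG] := eqVneq G 0; first exact: adjoin_der0.
set c := lead_coef G0; set M := lead_coef G *: 'X^(size G - size G0).
have dc : dom c by exact: oG0.
have oM : poly_on M by apply: poly_onZ; [exact: oG | exact: poly_onXn].
have oG1 : poly_on (c *: G - M * G0).
  by apply: poly_onD; [exact: poly_onZ | apply/poly_onN/poly_onM].
have DG1 : adjoin_der (c *: G - M * G0) = 0.
  apply: IH oG1 _; last by rewrite hornerD hornerN hornerZ hornerM rG r0 !mulr0 subrr.
  exact: leq_trans (size_lead_cancel nz0 nzG (min G oG nzG rG)) szG.
have DMG0 : adjoin_der (M * G0) = 0 by rewrite adjoin_derM // DG0 r0 !mulr0 addr0.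
have : adjoin_der (c *: G) = c * adjoin_der G.
  rewrite -mul_polyC adjoin_derM //; last exact: poly_onC.
  by rewrite adjoin_derC rG mulr0 add0r hornerC.
have oMG0 : poly_on (M * G0) by exact: poly_onM.
rewrite -(subrK (M * G0) (c *: G)) adjoin_derD // DG1 DMG0 addr0.
by move=> /esym/eqP; rewrite mulf_eq0 lead_coef_eq0 (negbTE nz0) => /eqP.
Qed.

End Adjoin.

Lemma adjoin_der_compatible t : exists s,
  forall G, poly_on G -> G.[t] = 0 -> adjoin_der t s G = 0.
Proof.
case: (classic (exists m G, [/\ poly_on G, G != 0, G.[t] = 0 & size G = m]));
  last first.
  move=> none; exists 0 => G oG rG; have [->|nzG] := eqVneq G 0.
    exact: adjoin_der0.
  by case: none; exists (size G), G.
move=> /ex_minimal [m [[G0 [oG0 nz0 r0 <-]] minm]].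
have min G : poly_on G -> G != 0 -> G.[t] = 0 -> (size G0 <= size G)%N.
  by move=> oG nzG rG; rewrite leqNgt; apply/negP => lt; apply: (minm _ lt); exists G.
have gt1 : (1 < size G0)%N.
  rewrite ltnNge; apply/negP => le1; move: nz0 r0.
  by rewrite (size1_polyC le1) hornerC => /negP nz0 e; apply: nz0; rewrite e.
have nzd : G0^`().[t] != 0.
  apply/eqP => d0; have := min _ (poly_on_deriv oG0) (deriv_neq0 gt1) d0.
  by rewrite leqNgt lt_size_deriv.
exists (- (map_poly D G0).[t] / G0^`().[t]).
by apply: adjoin_der_root oG0 nz0 r0 _ min; rewrite /adjoin_der; field.
Qed.

Lemma derivation_adjoin t :
  exists dom' D', [/\ derivation dom' D',
    forall a, dom a -> dom' a /\ D' a = D a & dom' t].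
Proof.
have [s s_wd] := adjoin_der_compatible t.
have [D' D'E] : exists D', forall G, poly_on G -> D' G.[t] = adjoin_der t s G.
  apply: (factor_through_image 0 (ev := horner^~ t)) => G H oG oH /= eGH.
  have oGH : poly_on (G - H) by apply: poly_onD => //; exact: poly_onN.
  rewrite -(subrK H G) adjoin_derD // s_wd ?add0r //.
  by rewrite hornerD hornerN eGH subrr.
have oC a : dom a -> poly_on a%:P by exact: poly_onC.
exists (fun c => exists2 G, poly_on G & c = G.[t]), D'; split.
- split.
  + by move=> k Kk; exists k%:P; rewrite ?hornerC //; apply/oC/(dom_K hD).
  + move=> _ _ [G oG ->] [H oH ->]; exists (G + H); rewrite ?hornerD //.
    exact: poly_onD.
  + move=> _ _ [G oG ->] [H oH ->]; exists (G * H); rewrite ?hornerM //.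
    exact: poly_onM.
  + by move=> _ [G oG ->]; exists (- G); rewrite ?hornerN //; exact: poly_onN.
  + move=> _ _ [G oG ->] [H oH ->]; have oGH := poly_onD oG oH.
    by rewrite -hornerD !D'E // adjoin_derD.
  + move=> _ _ [G oG ->] [H oH ->]; have oGH := poly_onM oG oH.
    by rewrite -hornerM !D'E // adjoin_derM.
  + move=> k Kk; have ok := oC k (dom_K hD Kk).
    by rewrite -(hornerC k t) D'E // adjoin_derC (derivation_K hD).
- move=> a da; have oa := oC a da.
  split; first by exists a%:P; rewrite ?hornerC.
  by rewrite -{1}(hornerC a t) D'E // adjoin_derC.
- by exists 'X; rewrite ?hornerX //; exact: poly_onX.
Qed.

End DerivationTheory.

Lemma derivation_adjoin_seq dom D (r : seq L) : derivation dom D ->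
  exists dom' D', [/\ derivation dom' D',
    forall a, dom a -> dom' a /\ D' a = D a & forall c, c \in r -> dom' c].
Proof.
elim: r dom D => [|t r IH] dom D hD; first by exists dom, D; split.
have [dom1 [D1 [hD1 ext1 dt]]] := derivation_adjoin hD t.
have [dom2 [D2 [hD2 ext2 dr]]] := IH _ _ hD1.
exists dom2, D2; split => //.
  move=> a da; have [da1 e1] := ext1 a da; have [da2 e2] := ext2 a da1.
  by rewrite e2 e1.
move=> c; rewrite in_cons => /orP [/eqP ->|cr]; last exact: dr.
by have [] := ext2 t dt.
Qed.

Lemma derivation_of_alg_indep n (x u : 'I_n -> L) :
  (forall p : {mpoly L[n]}, p \is a mpolyOver n K -> p.@[x] = 0 -> p = 0) ->
  exists dom D, derivation dom D /\ forall j, dom (x j) /\ D (x j) = u j.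
Proof.
move=> hx; pose dirder (q : {mpoly L[n]}) := \sum_i (q^`M(i)).@[x] * u i.
have [D DE] : exists D, forall q, q \is a mpolyOver n K -> D q.@[x] = dirder q.
  apply: (factor_through_image 0 (ev := meval x)) => p q Kp Kq /= epq.
  suff -> : p = q by [].
  by apply/eqP; rewrite -subr_eq0; apply/eqP/hx; rewrite ?rpredB // mevalB epq subrr.
have KX j : ('X_j : {mpoly L[n]}) \is a mpolyOver n K by apply: mpolyOverX.
exists (fun c => exists2 q, q \is a mpolyOver n K & c = q.@[x]), D; split.
- split.
  + by move=> k Kk; exists k%:MP; rewrite ?mpolyOverC ?mevalC.
  + by move=> _ _ [p Kp ->] [q Kq ->]; exists (p + q); rewrite ?rpredD ?mevalD.
  + by move=> _ _ [p Kp ->] [q Kq ->]; exists (p * q); rewrite ?rpredM ?mevalM.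
  + by move=> _ [p Kp ->]; exists (- p); rewrite ?rpredN ?mevalN.
  + move=> _ _ [p Kp ->] [q Kq ->]; rewrite -mevalD !DE ?rpredD // /dirder -big_split.
    by apply: eq_bigr => i _; rewrite mderivD mevalD mulrDl.
  + move=> _ _ [p Kp ->] [q Kq ->]; rewrite -mevalM !DE ?rpredM //.
    rewrite /dirder mulr_suml mulr_sumr -big_split /=; apply: eq_bigr => i _.
    by rewrite mderivM mevalD !mevalM; ring.
  + move=> k Kk; rewrite -(mevalC x k) DE ?mpolyOverC // /dirder big1 // => i _.
    by rewrite mderivC meval0 mul0r.
- move=> j; split; first by exists 'X_j; rewrite ?mevalXU.
  by rewrite -[x j](mevalXU x) DE // /dirder meval_mderivX_sum.
Qed.

End Derivations.

Section Jacobian.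
Variables (K : {pred C}) (hK : is_subfield K).

Definition jacY n (f : 'I_n -> {mpoly C[n + n]}) (x y : 'I_n -> C) : 'M[C]_n :=
  \matrix_(j < n, k < n) ((f j)^`M(rshift n k)).@[pt x y].

Definition mgrad n (q : {mpoly C[n]}) (y : 'I_n -> C) : 'rV[C]_n :=
  \row_k (q^`M(k)).@[y].

Lemma pt_lshift n (x y : 'I_n -> C) i : pt x y (lshift n i) = x i.
Proof. by rewrite /pt (unsplitK (inl i : 'I_n + 'I_n)). Qed.

Lemma pt_rshift n (x y : 'I_n -> C) i : pt x y (rshift n i) = y i.
Proof. by rewrite /pt (unsplitK (inr i : 'I_n + 'I_n)). Qed.

Variables (n : nat) (x y : 'I_n -> C) (f : 'I_n -> {mpoly C[n + n]}).
Hypotheses (hfK : forall j, f j \is a mpolyOver (n + n) K)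
  (hf0 : forall j, (f j).@[pt x y] = 0).

Let hKring := GRing.divring_closedBM hK.

Lemma derivation_jacobian dom D : derivation K dom D ->
  (forall i, dom (x i)) -> (forall k, dom (y k)) -> forall j,
  \sum_i jacX f x y j i * D (x i) + \sum_k jacY f x y j k * D (y k) = 0.
Proof.
move=> hD domx domy j.
have dompt l : dom (pt x y l) by rewrite /pt; case: (split l).
have [_] := derivation_meval hKring hD dompt (hfK j).
rewrite hf0 (derivation0 hKring hD) big_split_ord /= => e; rewrite [RHS]e.
by congr (_ + _); apply: eq_bigr => i _; rewrite !mxE ?pt_lshift ?pt_rshift.
Qed.

Lemma jacobian_factor (q : {mpoly C[n]}) : alg_indep K x ->
  q \is a mpolyOver n K -> q.@[y] = 0 ->
  exists M, jacX f x y = - jacY f x y *m M /\ mgrad q y *m M = 0.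
Proof.
move=> hx Kq qy.
have col i : exists v : 'I_n -> C,
    (forall j, jacX f x y j i + \sum_k jacY f x y j k * v k = 0) /\
    \sum_k (q^`M(k)).@[y] * v k = 0.
  have [dom0 [D0 [hD0 D0x]]] := derivation_of_alg_indep hKring (fun l => (i == l)%:R) hx.
  have [dom [D [hD ext domy]]] :=
    derivation_adjoin_seq hKring [seq y k | k <- enum 'I_n] hD0.
  have domy' k : dom (y k) by apply/domy/map_f; rewrite mem_enum.
  have Dx l : dom (x l) /\ D (x l) = (i == l)%:R.
    by have [d0 <-] := D0x l; apply: ext.
  exists (fun k => D (y k)); split.
    move=> j; rewrite -[RHS](derivation_jacobian hD (fun l => (Dx l).1) domy' j).
    congr (_ + _); rewrite (bigD1 i) //= (Dx i).2 eqxx mulr1 big1 ?addr0 //.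
    by move=> l /negbTE il; rewrite (Dx l).2 eq_sym il mulr0.
  have [_] := derivation_meval hKring hD domy' Kq.
  by rewrite qy (derivation0 hKring hD) => /esym.
have [V hV] := fin_all_exists col.
exists (\matrix_(k, i) V i k); split.
  apply/matrixP => j i; have /eqP := (hV i).1 j; rewrite addr_eq0 => /eqP ->.
  by rewrite mulNmx !mxE; congr (- _); apply: eq_bigr => k _; rewrite !mxE.
apply/rowP => i; rewrite !mxE -[RHS](hV i).2.
by apply: eq_bigr => k _; rewrite !mxE.
Qed.

End Jacobian.

Unset Implicit Arguments.
Set Strict Implicit.

Theorem theorem1 (K : {pred C}) (hK : is_subfield K) (n : nat) (hn : (1 <= n)%N)
  (x y : 'I_n -> C) (f : 'I_n -> {mpoly C[n + n]})
  (hfK : forall j, f j \is a mpolyOver (n + n) K)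
  (hf0 : forall j, (f j).@[pt x y] = 0)
  (hx : alg_indep K x)
  (hdet : \det (jacX f x y) != 0) :
  alg_indep K y.
Proof.
move=> p Kp py; apply/eqP; apply: contraT => nzp.
have [q [k [Kq qy dqy]]] :=
  exists_root_mderiv_neq0 (GRing.subring_closedB (GRing.divring_closedBM hK)) Kp nzp py.
have [M [eJ eM]] := jacobian_factor hK hfK hf0 hx Kq qy.
have uM : M \in unitmx.
  by move: hdet; rewrite eJ -unitfE -unitmxE unitmx_mul => /andP [].
have : mgrad q y = 0 by rewrite -(mulmxK uM (mgrad q y)) eM mul0mx.
by move/rowP/(_ k)/eqP; rewrite !mxE (negbTE dqy).
Qed.
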